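(* Let $k\ge 2$, $n\ge1$, and let $L_n$ and $\varphi:L_n\to E^{n-1}$ be as in the context. Then $\varphi$ is a bijection.
   Context: $E=\{0,\dots,k-1\}$. For $\mathbf a\in E^n$, $w(\mathbf a)=a_1+\dots+a_n$, and $\mathcal B_t=\{\mathbf a\in E^n: w(\mathbf a)=t\}$. Let $g=\lfloor n(k-1)/2\rfloor$ and $C_i=\{\mathbf a\in E^n: a_1=i\}$. Define $L_n=(\mathcal B_0\cup\dots\cup\mathcal B_g)\cap(C_0\cup C_{k-1})$ if $n(k-1)$ is odd, and $L_n=((\mathcal B_0\cup\dots\cup\mathcal B_{g-1})\cap(C_0\cup C_{k-1}))\cup(\mathcal B_g\cap C_0)$ if $n(k-1)$ is even. For $a\in E$ let $\overline a=k-1-a$. Define $\varphi(a_1,\dots,a_n)=(a_2,\dots,a_n)$ if $a_1=0$ and $\varphi(a_1,\dots,a_n)=(\overline{a}_2,\dots,\overline{a}_n)$ if $a_1=k-1$. *)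

From mathcomp Require Import all_boot.
Set Implicit Arguments. Unset Strict Implicit. Unset Printing Implicit Defensive.

(* E = {0,...,k-1} is 'I_k ; E^n is n.-tuple 'I_k ; the tuple (a_1,...,a_n)
   is stored in order, so a_1 is the head. *)

Definition wt (k n : nat) (a : n.-tuple 'I_k) : nat := \sum_(i <- a) (i : nat).

(* first coordinate a_1 (as a natural number; meaningful for n >= 1) *)
Definition first_entry (k n : nat) (a : n.-tuple 'I_k) : nat :=
  head 0 (map (@nat_of_ord k) a).

Definition gval (k n : nat) : nat := (n * (k - 1))./2.

Definition in_C0_Ck1 (k n : nat) (a : n.-tuple 'I_k) : bool :=
  (first_entry a == 0) || (first_entry a == k - 1).

Definition L (k n : nat) : {set n.-tuple 'I_k} :=
  if odd (n * (k - 1)) then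
    [set a | (wt a <= gval k n) && in_C0_Ck1 a]
  else
    [set a | ((wt a < gval k n) && in_C0_Ck1 a)
             || ((wt a == gval k n) && (first_entry a == 0))].

(* complement  abar = k-1-a  is rev_ord (value k - a.+1 = k-1-a) *)
(* phi (a_1,...,a_n) = (a_2,...,a_n) if a_1 = 0, else (abar_2,...,abar_n)
   (the latter case is used for a_1 = k-1; on L_n these are the only cases) *)
Definition phi (k n : nat) (a : n.-tuple 'I_k) : (n.-1).-tuple 'I_k :=
  if first_entry a == 0 then behead_tuple a
  else map_tuple (@rev_ord k) (behead_tuple a).

From mathcomp Require Import all_boot.
From mathcomp Require Import zify.

Set Implicit Arguments. Unset Strict Implicit. Unset Printing Implicit Defensive.

(* The fibre of phi over b contains, among tuples of C_0 u C_{k-1}, exactly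
   0::b and (k-1)::bbar.  Their weights add up to n(k-1), so exactly one of
   them has weight at most g, ties at weight g going to the 0-prefixed one;
   the definition of L_n keeps exactly that one. *)

Lemma wt_cons k m (x : 'I_k) (c : m.-tuple 'I_k) : wt [tuple of x :: c] = x + wt c.
Proof. by rewrite /wt big_cons. Qed.

Lemma wt_map_rev_ord k m (c : m.-tuple 'I_k.+1) :
  wt (map_tuple (@rev_ord k.+1) c) + wt c = m * k.
Proof.
rewrite /wt /=; case: c => s /= /eqP <-.
elim: s => [|x s IH]; first by rewrite !big_nil.
by rewrite /= !big_cons /=; have := ltn_ord x; lia.
Qed.

Lemma in_C0_Ck1_L k n a : a \in L k n -> in_C0_Ck1 a.
Proof.
rewrite /L /in_C0_Ck1; case: odd; rewrite inE; first by case/andP.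
by case/orP => /andP[_ ->] //; rewrite orbT.
Qed.

Lemma map_rev_ordK k m : involutive (map_tuple (@rev_ord k) : m.-tuple _ -> _).
Proof.
by move=> c; apply/val_inj; rewrite /= -map_comp (eq_map (@rev_ordK k)) map_id.
Qed.

(* The alphabet is 'I_k.+1 here, so k is the paper's k-1 and n = m.+1. *)
Section Fibres.
Variables k m : nat.
Hypothesis k_gt0 : 0 < k.

Local Notation n := m.+1.
Local Notation L := (L k.+1 n).

Definition cons_bot (c : m.-tuple 'I_k.+1) : n.-tuple 'I_k.+1 := [tuple of ord0 :: c].

Definition cons_top_compl (c : m.-tuple 'I_k.+1) : n.-tuple 'I_k.+1 :=
  [tuple of ord_max :: map_tuple (@rev_ord k.+1) c].

Lemma phi_cons_bot c : phi (cons_bot c) = c.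
Proof. exact/val_inj. Qed.

Lemma phi_cons_top_compl c : phi (cons_top_compl c) = c.
Proof.
rewrite /phi /= ifN_eq -?lt0n //.
by rewrite -[RHS]map_rev_ordK; apply/val_inj.
Qed.

Lemma mem_L_cons_bot c : (cons_bot c \in L) = (wt c <= gval k.+1 n).
Proof.
rewrite /L /gval subn1.
by case: odd; rewrite !inE /in_C0_Ck1 /first_entry wt_cons /= ?andbT // orbC -leq_eqVlt.
Qed.

Lemma mem_L_cons_top_compl c : (cons_top_compl c \in L) = (gval k.+1 n < wt c).
Proof.
have wt_compl := wt_map_rev_ord c.
have halves := odd_double_half (n * k); rewrite -muln2 in halves.
rewrite /L /gval subn1; case: odd halves => /= halves;
  rewrite !inE /in_C0_Ck1 /first_entry wt_cons /= subn1 eqxx orbT andbT.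
  by apply/idP/idP; lia.
by rewrite (negbTE (lt0n_neq0 k_gt0)) andbF orbF; apply/idP/idP; lia.
Qed.

Lemma mem_L_cons_top_complE c : (cons_top_compl c \in L) = (cons_bot c \notin L).
Proof. by rewrite mem_L_cons_bot mem_L_cons_top_compl ltnNge. Qed.

Lemma mem_L_phi_cases a :
  a \in L -> a = cons_bot (phi a) \/ a = cons_top_compl (phi a).
Proof.
case: a => [[|x s] size_s] // aL.
set c : m.-tuple 'I_k.+1 := Tuple (size_s : size s == m).
have : (x == 0 :> nat) || (x == k :> nat).
  by have := in_C0_Ck1_L aL; rewrite /in_C0_Ck1 subn1.
case/orP => /eqP x_val.
- left; have -> : Tuple size_s = cons_bot c.
    by apply/val_inj; congr (_ :: _); apply/val_inj.
  by rewrite phi_cons_bot.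
- right; have -> : Tuple size_s = cons_top_compl (map_tuple (@rev_ord k.+1) c).
    by apply/val_inj; congr (_ :: _); [apply/val_inj | rewrite map_rev_ordK].
  by rewrite phi_cons_top_compl.
Qed.

Definition phi_inv (c : m.-tuple 'I_k.+1) : n.-tuple 'I_k.+1 :=
  if cons_bot c \in L then cons_bot c else cons_top_compl c.

Lemma phi_inv_in_L c : phi_inv c \in L.
Proof. by rewrite /phi_inv; case: ifP => [// | /negbT]; rewrite mem_L_cons_top_complE. Qed.

Lemma phi_invK : cancel phi_inv (@phi k.+1 n).
Proof. by move=> c; rewrite /phi_inv; case: ifP; rewrite ?phi_cons_bot ?phi_cons_top_compl. Qed.

Lemma phiK : {in L, cancel (@phi k.+1 n) phi_inv}.
Proof.
move=> a aL; rewrite /phi_inv.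
have [a_bot | a_top] := mem_L_phi_cases aL.
- by rewrite -a_bot aL.
- by move: aL; rewrite {1}a_top mem_L_cons_top_complE => /negbTE ->.
Qed.

End Fibres.

Theorem corollary1 (k n : nat) :
  2 <= k -> 1 <= n ->
  {in L k n &, injective (@phi k n)} /\
  (forall b : (n.-1).-tuple 'I_k, exists2 a, a \in L k n & phi a = b).
Proof.
case: k => [|k] // k_gt0; case: n => [|m] // _; split.
- exact: can_in_inj (phiK k_gt0).
- by move=> b; exists (phi_inv b); rewrite ?phi_inv_in_L ?phi_invK.
Qed.
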